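(* Let $X$ be a finite set, $f:2^X\to\mathbb{R}_{\ge0}$ a normalized monotone submodular function possessing supermodularity of conditioning, $n\le|X|$ a positive integer and $S^*\in\arg\max_{S\subseteq X,\,|S|\le n}f(S)$. Let $x_1,\dots,x_n\in X$ be arbitrary distinct elements, $S_0=\emptyset$, $S_i=\{x_1,\dots,x_i\}$. For each $i$ let $M_i:=\max_{x\in X\setminus S_{i-1}}\bar f(x\mid S_{i-1})$ and define $\beta_i:=\underline f(x_i\mid S_{i-1})/M_i$ if $\underline f(x_i\mid S_{i-1})>0$, and $\beta_i:=0$ otherwise. Then \[ f(S_n)\ \ge\ \left(1-e^{-\frac1n\sum_{i=1}^n\beta_i}\right)f(S^* ). \] (Here $\beta_i$ plays the role of $1/\alpha_i$ with $\alpha_i=M_i/\underline f(x_i\mid S_{i-1})$, and $\alpha_i=\infty$ when the lower estimate is not positive.)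
   Context: $f(x\mid A):=f(A\cup\{x\})-f(A)$, $f(x):=f(\{x\})$, $f(x\mid y):=f(x\mid\{y\})$. Pairwise upper estimate: $\bar f(x\mid S):=\min_{A\subseteq S,|A|\le1}f(x\mid A)$ (so $\bar f(x\mid\emptyset)=f(x)$). Pairwise lower estimate: $\underline f(x\mid S):=f(x)-\sum_{y\in S}(f(x)-f(x\mid y))$. Supermodularity of conditioning: for all $S\subseteq X$, $A\subseteq B\subseteq X$, $C\subseteq X\setminus B$, $f(S\mid A)-f(S\mid A\cup C)\ge f(S\mid B)-f(S\mid B\cup C)$, where $f(T\mid A):=f(A\cup T)-f(A)$. *)

From HB Require Import structures.
From mathcomp Require Import all_boot all_order all_algebra.
From mathcomp Require Import reals.
From mathcomp Require Import sequences exp.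
Set Implicit Arguments. Unset Strict Implicit. Unset Printing Implicit Defensive.
Import Order.TTheory GRing.Theory Num.Theory.
Local Open Scope ring_scope.

Section SetFunctions.
Variables (R : realType) (X : finType) (f : {set X} -> R).

Definition condf (T A : {set X}) : R := f (A :|: T) - f A.
Definition margf (x : X) (A : {set X}) : R := f (A :|: [set x]) - f A.

Definition normalized : Prop := f set0 = 0.
Definition nonneg : Prop := forall S, 0 <= f S.
Definition monotone : Prop := forall A B : {set X}, A \subset B -> f A <= f B.
Definition submodular : Prop :=
  forall A B : {set X}, f (A :|: B) + f (A :&: B) <= f A + f B.

Definition supermod_cond : Prop :=
  forall S A B C : {set X}, A \subset B -> [disjoint C & B] ->
    condf S A - condf S (A :|: C) >= condf S B - condf S (B :|: C).

Definition fbar (x : X) (S : {set X}) : R :=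
  \big[Num.min/margf x set0]_(A : {set X} | (A \subset S) && (#|A| <= 1)%N)
     margf x A.

Definition flow (x : X) (S : {set X}) : R :=
  f [set x] - \sum_(y in S) (f [set x] - margf x [set y]).

End SetFunctions.

(* S_i = {x_1, ..., x_i}, with the sequence indexed 0-based by 'I_n:
   Sprefix x i = { x j | j < i } *)
Definition Sprefix (X : finType) (n : nat) (x : 'I_n -> X) (i : nat) : {set X} :=
  x @: [set j : 'I_n | (j < i)%N].

(* M_i = max_{y in X \ S_{i-1}} fbar(y | S_{i-1})  (default 0; the index set
   is nonempty and fbar >= 0 under the hypotheses) *)
Definition Mval (R : realType) (X : finType) (f : {set X} -> R) (S : {set X}) : R :=
  \big[Num.max/0]_(y in ~: S) fbar f y S.

Definition betaval (R : realType) (X : finType) (f : {set X} -> R)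
    (xi : X) (S : {set X}) : R :=
  if 0 < flow f xi S then flow f xi S / Mval f S else 0.

From HB Require Import structures.
From mathcomp Require Import all_boot all_order all_algebra.
From mathcomp Require Import reals.
From mathcomp Require Import sequences exp.
From mathcomp Require Import ring lra.
Import Order.TTheory GRing.Theory Num.Theory.
Local Open Scope ring_scope.

(* Let D_i := f(S* ) - f(S_i).  Submodularity bounds D_{i-1} by the sum of the
   marginal gains of the elements of S*, hence by n M_i, while supermodularity of
   conditioning makes the pairwise lower estimate a true lower bound on the gain
   f(x_i | S_{i-1}) = D_{i-1} - D_i.  Thus D_i <= (1 - beta_i / n) D_{i-1}, and
   1 - t <= e^{-t} turns the product of these factors into the exponential. *)

Lemma setU1_ind (X : finType) (P : {set X} -> Prop) :
  P set0 -> (forall (y : X) (T : {set X}), y \notin T -> P T -> P (y |: T)) ->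
  forall T, P T.
Proof.
move=> P0 PU T; move: {2}#|T| (erefl #|T|) => k; elim: k T => [|k IH] T cardT.
  by move/eqP: cardT; rewrite cards_eq0 => /eqP ->.
have [y yT] : exists y, y \in T by apply/set0Pn; rewrite -card_gt0 cardT.
rewrite -(setD1K yT); apply: PU; first by rewrite setD11.
by apply: IH; move: cardT; rewrite (cardsD1 y) yT add1n => -[].
Qed.

Lemma decay_le_expR_sum {R : realType} {g c : nat -> R} {m : nat} :
  (forall k, (k < m)%N -> 0 <= g k /\ g k.+1 <= (1 - c k) * g k) ->
  g m <= expR (- \sum_(k < m) c k) * g 0.
Proof.
elim: m => [|m IH] decay; first by rewrite big_ord0 oppr0 expR0 mul1r.
have [g_ge0 g_step] := decay m (ltnSn m).
have factor_le : 1 - c m <= expR (- c m) by exact: expR_ge1Dx.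
apply: le_trans g_step (le_trans (ler_wpM2r g_ge0 factor_le) _).
rewrite big_ord_recr /= opprD expRD [expR _ * _]mulrC -mulrA.
apply: ler_wpM2l; first exact: expR_ge0.
by apply: IH => k ltkm; apply: decay; apply: ltnW.
Qed.

Section SetFunction.
Context {R : realType} {X : finType} {f : {set X} -> R}.
Hypotheses (f_norm : normalized f) (f_mono : monotone f)
  (f_sub : submodular f) (f_smc : supermod_cond f).

Lemma margf_ge0 (x : X) (S : {set X}) : 0 <= margf f x S.
Proof. by rewrite subr_ge0 f_mono ?subsetUl. Qed.

Lemma margf_subset_le (x : X) {A B : {set X}} :
  A \subset B -> margf f x B <= margf f x A.
Proof.
move=> sAB; have := f_sub (A :|: [set x]) B.
rewrite setUAC (setUidPr sAB).
have : f A <= f ((A :|: [set x]) :&: B) by rewrite f_mono // subsetI subsetUl.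
rewrite /margf; lra.
Qed.

Lemma gain_le_sum_margf (S T : {set X}) :
  f (S :|: T) - f S <= \sum_(y in T) margf f y S.
Proof.
elim/setU1_ind: T => [|y T yT IH]; first by rewrite setU0 big_set0 subrr.
rewrite big_setU1 //= setUA setUAC.
have := margf_subset_le y (subsetUl S T).
rewrite /margf; lra.
Qed.

Lemma flow_le_margf (x : X) (S : {set X}) : flow f x S <= margf f x S.
Proof.
elim/setU1_ind: S => [|y T yT IH].
  by rewrite /flow /margf big_set0 set0U f_norm !subr0.
have := f_smc [set x] set0 T [set y] (sub0set T).
rewrite disjoints1 => /(_ yT); move: IH.
rewrite /flow big_setU1 //= [T :|: _]setUC /condf /margf !set0U f_norm; lra.
Qed.

Lemma margf_le_fbar (x : X) (S : {set X}) : margf f x S <= fbar f x S.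
Proof.
rewrite /fbar; elim/big_rec: _ => [|A m /andP[sAS _] le_m].
  exact: margf_subset_le (sub0set S).
by rewrite le_min le_m margf_subset_le.
Qed.

Lemma Mval_ge0 (S : {set X}) : 0 <= Mval f S.
Proof. by rewrite /Mval; elim/big_rec: _ => // i m _ h; rewrite le_max h orbT. Qed.

Lemma fbar_le_Mval {y : X} {S : {set X}} : y \notin S -> fbar f y S <= Mval f S.
Proof.
by move=> yS; rewrite /Mval (bigD1 y) ?inE //= le_max lexx.
Qed.

Lemma margf_le_Mval (y : X) (S : {set X}) : margf f y S <= Mval f S.
Proof.
have [yS | yS] := boolP (y \in S).
  by rewrite /margf (setUidPl _) ?sub1set // subrr Mval_ge0.
exact: le_trans (margf_le_fbar y S) (fbar_le_Mval yS).
Qed.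

Lemma gap_le_Mval (n : nat) (T S : {set X}) :
  (#|T| <= n)%N -> f T - f S <= n%:R * Mval f S.
Proof.
move=> cardT.
have le_fT : f T <= f (S :|: T) by rewrite f_mono ?subsetUr.
have le_sum : \sum_(y in T) margf f y S <= #|T|%:R * Mval f S.
  by rewrite mulr_natl -sumr_const ler_sum // => y _; apply: margf_le_Mval.
have : #|T|%:R * Mval f S <= n%:R * Mval f S by rewrite ler_wpM2r ?Mval_ge0 ?ler_nat.
have := gain_le_sum_margf S T; lra.
Qed.

Lemma greedy_step {n : nat} {T S : {set X}} {x : X} :
  (0 < n)%N -> (#|T| <= n)%N -> x \notin S ->
  f T - f (S :|: [set x]) <= (1 - betaval f x S / n%:R) * (f T - f S).
Proof.
move=> n_gt0 cardT xS.
have gain : f (S :|: [set x]) = f S + margf f x S by rewrite /margf; lra.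
rewrite gain /betaval; case: ifP => [flow_gt0|_]; last first.
  by rewrite mul0r subr0 mul1r; have := margf_ge0 x S; lra.
have M_gt0 : 0 < Mval f S.
  exact: lt_le_trans flow_gt0 (le_trans (flow_le_margf x S) (margf_le_Mval x S)).
have nR_gt0 : 0 < n%:R :> R by rewrite ltr0n.
suff : flow f x S / Mval f S / n%:R * (f T - f S) <= margf f x S by lra.
apply: le_trans (_ : _ * (n%:R * Mval f S) <= _).
  by apply: ler_wpM2l; [rewrite !divr_ge0 ?ltW | exact: gap_le_Mval].
have -> : flow f x S / Mval f S / n%:R * (n%:R * Mval f S) = flow f x S.
  by field; rewrite !gt_eqF.
exact: flow_le_margf.
Qed.

End SetFunction.

Section Prefix.
Context {X : finType} {n : nat} (x : 'I_n -> X).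

Lemma Sprefix0 : Sprefix x 0 = set0.
Proof. by apply/setP => y; rewrite inE; apply/negbTE/imsetP => -[j]; rewrite inE. Qed.

Lemma SprefixS {k} (ltkn : (k < n)%N) :
  Sprefix x k.+1 = Sprefix x k :|: [set x (Ordinal ltkn)].
Proof.
rewrite /Sprefix -imset_set1 -imsetU.
suff -> : [set j : 'I_n | (j < k.+1)%N] =
          [set j : 'I_n | (j < k)%N] :|: [set Ordinal ltkn] by [].
by apply/setP => j; rewrite !inE ltnS leq_eqVlt -val_eqE /= orbC.
Qed.

Lemma card_Sprefix_le k : (#|Sprefix x k| <= n)%N.
Proof.
apply: leq_trans (leq_imset_card _ _) _.
by apply: leq_trans (max_card _) _; rewrite card_ord.
Qed.

Lemma notin_Sprefix (x_inj : injective x) {k} (ltkn : (k < n)%N) :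
  x (Ordinal ltkn) \notin Sprefix x k.
Proof.
by apply/imsetP => -[j]; rewrite inE => ltjk /x_inj eq_j; rewrite -eq_j ltnn in ltjk.
Qed.

End Prefix.

Theorem mainTheorem8 (R : realType) (X : finType) (f : {set X} -> R)
  (f_nonneg : nonneg f) (f_norm : normalized f) (f_mono : monotone f)
  (f_sub : submodular f) (f_smc : supermod_cond f)
  (n : nat) (n_pos : (0 < n)%N) (n_le : (n <= #|X|)%N)
  (Sstar : {set X}) (Sstar_card : (#|Sstar| <= n)%N)
  (Sstar_opt : forall S : {set X}, (#|S| <= n)%N -> f S <= f Sstar)
  (x : 'I_n -> X) (x_inj : injective x) :
  f (Sprefix x n) >=
    (1 - expR (- ((n%:R)^-1 * \sum_(i < n) betaval f (x i) (Sprefix x i))))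
      * f Sstar.
Proof.
pose beta (i : 'I_n) := betaval f (x i) (Sprefix x i).
pose c k := oapp beta 0 (insub k) / n%:R.
pose gap k := f Sstar - f (Sprefix x k).
have gap_decay k : (k < n)%N -> 0 <= gap k /\ gap k.+1 <= (1 - c k) * gap k.
  move=> ltkn; split; first by rewrite subr_ge0 Sstar_opt ?card_Sprefix_le.
  rewrite /gap /c /beta insubT /= (SprefixS x ltkn).
  exact: (greedy_step f_norm f_mono f_sub f_smc n_pos Sstar_card
            (notin_Sprefix x x_inj ltkn)).
have := decay_le_expR_sum gap_decay.
have -> : \sum_(k < n) c k = (n%:R)^-1 * \sum_(i < n) beta i.
  by rewrite mulrC big_distrl; apply: eq_bigr => i _; rewrite /c valK.
rewrite /gap /beta Sprefix0 f_norm subr0 mulrBl mul1r; lra.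
Qed.
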